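(* For every irrational $\alpha>0$ there is a constant $C=C(\alpha)>0$ such that $\delta_{\min}^{(\alpha)}(N)\le C\,N^{-1/2}$ for all integers $N\ge2$.
   Context: For irrational $\alpha>0$, the numbers $\alpha m^2+n^2$ with integers $m,n\ge 1$ are pairwise distinct; list them in increasing order as $0<\lambda_1<\lambda_2<\cdots$. For $N\ge 2$ define $\delta_{\min}^{(\alpha)}(N)=\min\{\lambda_{i+1}-\lambda_i : 1\le i<N\}$. *)

From Stdlib Require Import Reals.
Open Scope R_scope.

Definition irrational (a : R) : Prop :=
  ~ exists (p q : Z), q <> 0%Z /\ a = IZR p / IZR q.

Definition in_spectrum (alpha x : R) : Prop :=
  exists m n : nat, (1 <= m)%nat /\ (1 <= n)%nat /\
    x = alpha * INR m ^ 2 + INR n ^ 2.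

(* lam is the increasing enumeration lambda_1 < lambda_2 < ... of that set
   (1-based: lam 1 is the smallest element; lam 0 is irrelevant). *)
Definition increasing_enum (alpha : R) (lam : nat -> R) : Prop :=
  (forall i : nat, (1 <= i)%nat -> lam i < lam (S i)) /\
  (forall x : R, in_spectrum alpha x <-> exists i : nat, (1 <= i)%nat /\ lam i = x).

(* delta_min lam N = min { lam (i+1) - lam i : 1 <= i < N }, for N >= 2
   (value 0 for N < 2 is a dummy). *)
Fixpoint delta_min (lam : nat -> R) (N : nat) : R :=
  match N with
  | O => 0
  | S k =>
    match k with
    | O => 0
    | S j =>
      match j with
      | O => lam 2%nat - lam 1%nat
      | S _ => Rmin (delta_min lam k) (lam N - lam k)
      end
    end
  end.

From Stdlib Require Import Reals Lra Lia List ZArith Classical.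
Open Scope R_scope.

(* Dirichlet's theorem gives 1 <= q <= Q and p with |q alpha - p| < 1/Q.  The spectrum values
   alpha (2q+1)^2 + (2p-1)^2 and alpha (2q-1)^2 + (2p+1)^2 differ by 8 (q alpha - p), which is
   nonzero by irrationality and smaller than 8/Q, and both are O(Q^2).  A spectrum value below X
   comes from a pair (m, n) with m, n = O(sqrt X), so both values are among lambda_1, ..., lambda_N
   as soon as N >= D Q^2 for a suitable D = D(alpha).  Taking Q = floor (sqrt (N / D)) gives
   delta_min(N) < 8/Q = O(N^(-1/2)); when this Q is too small for p >= 1 to be guaranteed, N is
   bounded and lambda_2 - lambda_1 <= 3 alpha suffices. *)

Lemma pigeonhole {T : Type} (f : nat -> T) (l : list T) (s n : nat) :
  (forall k, (s <= k < s + n)%nat -> In (f k) l) -> (length l < n)%nat ->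
  exists x y, (s <= x < y)%nat /\ (y < s + n)%nat /\ f x = f y.
Proof.
  intros Hin Hlen. apply NNPP; intro Hno.
  assert (Hnd : NoDup (map f (seq s n))).
  { apply NoDup_map_NoDup_ForallPairs; [|apply seq_NoDup].
    intros x y Hx%in_seq Hy%in_seq Hxy.
    destruct (Nat.lt_trichotomy x y) as [H|[H|H]]; [| exact H |]; exfalso; apply Hno.
    - exists x, y; repeat split; auto; lia.
    - exists y, x; repeat split; auto; lia. }
  assert (Hincl : incl (map f (seq s n)) l).
  { intros z (k & <- & Hk%in_seq)%in_map_iff. apply Hin, Hk. }
  pose proof (NoDup_incl_length Hnd Hincl) as Hle.
  rewrite length_map, length_seq in Hle. lia.
Qed.

Lemma dirichlet_approximation (a : R) (Q : nat) : (1 <= Q)%nat ->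
  exists (q : nat) (p : Z), (1 <= q <= Q)%nat /\ Rabs (INR q * a - IZR p) < / INR Q.
Proof.
  intros HQ. assert (HQr : 0 < INR Q) by (apply lt_0_INR; lia).
  set (frac k := INR k * a - IZR (Int_part (INR k * a))).
  set (box k := Z.to_nat (Int_part (INR Q * frac k))).
  assert (Hbox : forall k, (box k < Q)%nat /\ INR (box k) <= INR Q * frac k < INR (box k) + 1).
  { intro k.
    assert (Hfrac : 0 <= frac k < 1) by (unfold frac; pose proof (base_Int_part (INR k * a)); lra).
    destruct (base_Int_part (INR Q * frac k)) as [Hlo Hhi].
    assert (Hnn : (-1 < Int_part (INR Q * frac k))%Z) by (apply lt_IZR; nra).
    assert (Hbr : INR (box k) = IZR (Int_part (INR Q * frac k)))
      by (unfold box; rewrite INR_IZR_INZ, Z2Nat.id; auto; lia).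
    rewrite Hbr. split; [|lra].
    apply INR_lt. rewrite Hbr. nra. }
  destruct (pigeonhole box (seq 0 Q) 0 (S Q)) as (x & y & Hxy & HyQ & Heq).
  - intros k _. apply in_seq. pose proof (proj1 (Hbox k)). lia.
  - rewrite length_seq. lia.
  - exists (y - x)%nat, (Int_part (INR y * a) - Int_part (INR x * a))%Z. split; [lia|].
    destruct (Hbox x) as [_ Hx], (Hbox y) as [_ Hy].
    rewrite Heq in Hx.
    apply (Rmult_lt_reg_l (INR Q)); [exact HQr|].
    rewrite Rinv_r, <- (Rabs_right (INR Q)), <- Rabs_mult by lra.
    rewrite minus_INR, minus_IZR by lia.
    apply Rabs_def1; unfold frac in *; lra.
Qed.

Lemma delta_min_le_gap (lam : nat -> R) (N i : nat) : (1 <= i)%nat -> (i < N)%nat ->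
  delta_min lam N <= lam (S i) - lam i.
Proof.
  revert i; induction N as [|N IH]; intros i Hi HN; [lia|].
  destruct N as [|[|N]]; [lia | replace i with 1%nat by lia; simpl; lra |].
  change (delta_min lam (S (S (S N))))
    with (Rmin (delta_min lam (S (S N))) (lam (S (S (S N))) - lam (S (S N)))).
  destruct (Nat.eq_dec i (S (S N))) as [->|Hne].
  - apply Rmin_r.
  - eapply Rle_trans; [apply Rmin_l | apply IH; lia].
Qed.

Lemma square_lt_succ_le (m M : nat) : INR m ^ 2 < INR (S M) ^ 2 -> (m <= M)%nat.
Proof.
  intros H. apply Nat.nlt_ge; intro Hlt.
  assert (Hle : INR (S M) ^ 2 <= INR m ^ 2)
    by (apply pow_incr; split; [apply pos_INR | apply le_INR; lia]).
  lra.
Qed.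

Lemma spectrum_pair_diff (a : R) (q p : nat) : (1 <= q)%nat -> (1 <= p)%nat ->
  (a * INR (2 * q + 1) ^ 2 + INR (2 * p - 1) ^ 2)
  - (a * INR (2 * q - 1) ^ 2 + INR (2 * p + 1) ^ 2) = 8 * (INR q * a - INR p).
Proof.
  intros Hq Hp. rewrite !minus_INR, !plus_INR, !mult_INR by lia. simpl. ring.
Qed.

Section Enumeration.

Variables (a : R) (lam : nat -> R).
Hypotheses (Ha : 0 < a) (Hlam : increasing_enum a lam).

Lemma enum_lt (i k : nat) : (1 <= i)%nat -> (i < k)%nat -> lam i < lam k.
Proof.
  intros Hi Hk. induction k as [|k IH]; [lia|].
  assert (Hstep : lam k < lam (S k)) by (apply (proj1 Hlam); lia).
  destruct (Nat.eq_dec i k) as [->|Hne]; [exact Hstep|].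
  assert (lam i < lam k) by (apply IH; lia). lra.
Qed.

Lemma enum_le (i k : nat) : (1 <= i)%nat -> (i <= k)%nat -> lam i <= lam k.
Proof.
  intros Hi Hk. destruct (Nat.eq_dec i k) as [->|Hne]; [lra|].
  left; apply enum_lt; lia.
Qed.

Lemma enum_in_spectrum (i : nat) : (1 <= i)%nat -> in_spectrum a (lam i).
Proof. intros Hi. apply (proj2 Hlam). exists i; auto. Qed.

Lemma delta_min_le_dist (N i j : nat) :
  (1 <= i <= N)%nat -> (1 <= j <= N)%nat -> i <> j ->
  delta_min lam N <= Rabs (lam j - lam i).
Proof.
  intros Hi Hj Hij.
  assert (Hlt : forall i j, (1 <= i)%nat -> (i < j <= N)%nat ->
            delta_min lam N <= Rabs (lam j - lam i)).
  { clear i j Hi Hj Hij. intros i j Hi Hij.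
    pose proof (delta_min_le_gap lam N i Hi ltac:(lia)).
    pose proof (enum_lt i (S i) Hi ltac:(lia)).
    pose proof (enum_le (S i) j ltac:(lia) ltac:(lia)).
    rewrite Rabs_right; lra. }
  destruct (proj1 (Nat.lt_gt_cases i j) Hij).
  - apply Hlt; lia.
  - rewrite Rabs_minus_sym. apply Hlt; lia.
Qed.

Lemma enum_index_le (j M K : nat) : (1 <= j)%nat ->
  lam j < a * INR (S M) ^ 2 -> lam j < INR (S K) ^ 2 -> (j <= M * K)%nat.
Proof.
  intros Hj HM HK. apply Nat.nlt_ge; intro Hlt.
  set (box := map (fun mn => a * INR (fst mn) ^ 2 + INR (snd mn) ^ 2)
                  (list_prod (seq 1 M) (seq 1 K))).
  destruct (pigeonhole lam box 1 j) as (x & y & Hxy & Hy & Heq).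
  - intros k Hk.
    destruct (enum_in_spectrum k ltac:(lia)) as (m & n & Hm & Hn & Hk_eq).
    assert (Hkj : lam k <= lam j) by (apply enum_le; lia).
    assert (Hm0 : 0 <= a * INR m ^ 2) by (pose proof (pos_INR m); nra).
    assert (Hn0 : 0 <= INR n ^ 2) by (pose proof (pos_INR n); nra).
    apply in_map_iff. exists (m, n). split; [simpl; lra|].
    assert (HmM : (m <= M)%nat).
    { apply square_lt_succ_le, (Rmult_lt_reg_l a); [exact Ha | lra]. }
    assert (HnK : (n <= K)%nat) by (apply square_lt_succ_le; lra).
    apply in_prod_iff; split; apply in_seq; lia.
  - unfold box. rewrite length_map, length_prod, !length_seq. lia.
  - pose proof (enum_lt x y ltac:(lia) ltac:(lia)). lra.
Qed.

Lemma spectrum_index_le (x : R) (M K : nat) : in_spectrum a x ->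
  x < a * INR (S M) ^ 2 -> x < INR (S K) ^ 2 ->
  exists i, (1 <= i <= M * K)%nat /\ lam i = x.
Proof.
  intros Hx HM HK. destruct (proj1 (proj2 Hlam x) Hx) as (i & Hi & <-).
  exists i. split; [split; [exact Hi | apply enum_index_le; auto] | reflexivity].
Qed.

Lemma delta_min_le_spectrum_dist (N M K : nat) (x y X : R) :
  in_spectrum a x -> in_spectrum a y -> x <> y -> x <= X -> y <= X ->
  X < a * INR (S M) ^ 2 -> X < INR (S K) ^ 2 -> (M * K <= N)%nat ->
  delta_min lam N <= Rabs (y - x).
Proof.
  intros Hx Hy Hxy HxX HyX HM HK HN.
  destruct (spectrum_index_le x M K Hx) as (i & Hi & <-); try lra.
  destruct (spectrum_index_le y M K Hy) as (j & Hj & <-); try lra.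
  apply delta_min_le_dist; try lia.
  intros ->. exact (Hxy eq_refl).
Qed.

Lemma first_gap_le : lam 2%nat - lam 1%nat <= 3 * a.
Proof.
  assert (Hmin : forall x, in_spectrum a x -> x <> lam 1%nat -> lam 2%nat <= x).
  { intros x Hx Hne. destruct (proj1 (proj2 Hlam x) Hx) as (k & Hk & <-).
    apply enum_le; [lia|]. destruct (Nat.eq_dec k 1) as [->|]; [congruence | lia]. }
  assert (Hlow : a + 1 <= lam 1%nat).
  { destruct (enum_in_spectrum 1 (le_n 1)) as (m & n & Hm%le_INR & Hn%le_INR & ->).
    simpl in Hm, Hn. simpl.
    assert (1 <= INR m * INR m) by nra. assert (1 <= INR n * INR n) by nra. nra. }
  assert (H11 : in_spectrum a (a + 1))
    by (exists 1%nat, 1%nat; repeat split; [lia | lia | simpl; ring]).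
  assert (H21 : in_spectrum a (4 * a + 1))
    by (exists 2%nat, 1%nat; repeat split; [lia | lia | simpl; ring]).
  destruct (Req_dec (lam 1%nat) (a + 1)) as [E|E].
  - assert (lam 2%nat <= 4 * a + 1) by (apply Hmin; auto; lra). lra.
  - assert (lam 2%nat <= a + 1) by (apply Hmin; auto). lra.
Qed.

Variable A : nat.
Hypotheses (HaA : a <= INR A) (HAa : / a <= INR A).

Lemma one_le_INR_A : 1 <= INR A.
Proof. assert (a * / a = 1) by (field; lra). nra. Qed.

Lemma dirichlet_approximation_pos (Q : nat) : (A < Q)%nat ->
  exists q P : nat, (1 <= q <= Q)%nat /\ (1 <= P)%nat /\
    Rabs (INR q * a - INR P) < / INR Q /\ 2 * INR P + 1 <= 5 * INR A * INR Q.
Proof.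
  intros HQ. pose proof one_le_INR_A as HA1.
  assert (HQA : INR A + 1 <= INR Q) by (rewrite <- S_INR; apply le_INR; lia).
  assert (HQinv : / INR Q <= 1) by (rewrite <- Rinv_1; apply Rinv_le_contravar; lra).
  assert (HaQ : / INR Q < a).
  { assert (a * / a = 1) by (field; lra).
    apply (Rmult_lt_reg_l (INR Q)); [lra|]. rewrite Rinv_r by lra. nra. }
  destruct (dirichlet_approximation a Q) as (q & p & Hq & Hqp); [lia|].
  pose proof Hqp as [Hp_lo Hp_hi]%Rabs_def2.
  assert (Hqr : 1 <= INR q <= INR Q) by (split; [apply (le_INR 1) | apply le_INR]; lia).
  assert (Hp : (0 < p)%Z) by (apply lt_IZR; nra).
  assert (HP : INR (Z.to_nat p) = IZR p) by (rewrite INR_IZR_INZ, Z2Nat.id by lia; reflexivity).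
  exists q, (Z.to_nat p). rewrite HP. repeat split; [lia | lia | lia | exact Hqp | nra].
Qed.

Lemma spectrum_value_le (Q m n : nat) : (1 <= Q)%nat ->
  INR m <= 3 * INR Q -> INR n <= 5 * INR A * INR Q ->
  a * INR m ^ 2 + INR n ^ 2 <= 34 * (INR A * INR Q) ^ 2.
Proof.
  intros HQ%(le_INR 1) Hm Hn.
  pose proof one_le_INR_A. pose proof (pos_INR m). pose proof (pos_INR n).
  assert (INR m ^ 2 <= 9 * INR Q ^ 2) by nra.
  assert (a * INR m ^ 2 <= INR A * (9 * INR Q ^ 2)) by (apply Rmult_le_compat; nra).
  assert (INR n ^ 2 <= 25 * (INR A * INR Q) ^ 2) by nra.
  simpl in HQ. nra.
Qed.

Lemma box_bound_lt (Q : nat) : (1 <= Q)%nat ->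
  34 * (INR A * INR Q) ^ 2 < a * INR (S (6 * A * A * Q)) ^ 2 /\
  34 * (INR A * INR Q) ^ 2 < INR (S (6 * A * Q)) ^ 2.
Proof.
  intros HQ%(le_INR 1). pose proof one_le_INR_A as HA1.
  set (t := INR A * INR Q). assert (Ht : 1 <= t) by (unfold t; simpl in HQ; nra).
  rewrite !S_INR, !mult_INR. replace (INR 6) with 6 by (simpl; ring).
  replace (6 * INR A * INR A * INR Q) with (6 * INR A * t) by (unfold t; ring).
  replace (6 * INR A * INR Q) with (6 * t) by (unfold t; ring).
  split; [|nra].
  (* a >= 1 / A, so a (6 A^2 Q)^2 >= 36 A^3 Q^2. *)
  assert (HaA2 : 1 <= a * INR A * INR A).
  { assert (Hinv : a * / a = 1) by (field; lra).
    assert (1 <= a * INR A) by (rewrite <- Hinv; apply Rmult_le_compat_l; lra). nra. }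
  assert (t ^ 2 <= a * INR A * INR A * t ^ 2)
    by (rewrite <- (Rmult_1_l (t ^ 2)) at 1; apply Rmult_le_compat_r; nra).
  assert (0 < a * (12 * INR A * t + 1)) by (apply Rmult_lt_0_compat; nra).
  replace (a * (6 * INR A * t + 1) ^ 2)
    with (36 * (a * INR A * INR A * t ^ 2) + a * (12 * INR A * t + 1)) by ring.
  pose proof (pow2_ge_0 t). lra.
Qed.

Hypothesis Hirr : irrational a.

Lemma delta_min_lt_8_div (Q N : nat) :
  (A < Q)%nat -> (36 * A * A * A * (Q * Q) <= N)%nat -> delta_min lam N < 8 / INR Q.
Proof.
  intros HQ HN.
  destruct (dirichlet_approximation_pos Q HQ) as (q & P & Hq & HP & Hqp & HPQ).
  assert (HQr : INR q <= INR Q) by (apply le_INR; lia).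
  assert (HQ1 : 1 <= INR Q) by (apply (le_INR 1); lia).
  set (x := a * INR (2 * q + 1) ^ 2 + INR (2 * P - 1) ^ 2).
  set (y := a * INR (2 * q - 1) ^ 2 + INR (2 * P + 1) ^ 2).
  assert (Hdiff : x - y = 8 * (INR q * a - INR P)) by (apply spectrum_pair_diff; lia).
  assert (Hne : x <> y).
  { intros Exy. apply Hirr. exists (Z.of_nat P), (Z.of_nat q). split; [lia|].
    rewrite <- !INR_IZR_INZ. assert (1 <= INR q) by (apply (le_INR 1); lia).
    field_simplify_eq; lra. }
  assert (Hval : forall m n, (m <= 2 * q + 1)%nat -> (n <= 2 * P + 1)%nat ->
                 a * INR m ^ 2 + INR n ^ 2 <= 34 * (INR A * INR Q) ^ 2).
  { intros m n Hm%le_INR Hn%le_INR. rewrite plus_INR, mult_INR in Hm, Hn. simpl in Hm, Hn.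
    apply spectrum_value_le; [lia | lra | lra]. }
  destruct (box_bound_lt Q ltac:(lia)) as [HM HK].
  apply (Rle_lt_trans _ (Rabs (x - y))).
  - assert (Hx : in_spectrum a x)
      by (exists (2 * q + 1)%nat, (2 * P - 1)%nat; repeat split; lia).
    assert (Hy : in_spectrum a y)
      by (exists (2 * q - 1)%nat, (2 * P + 1)%nat; repeat split; lia).
    apply (delta_min_le_spectrum_dist N (6 * A * A * Q) (6 * A * Q) y x _ Hy Hx (not_eq_sym Hne)
             (Hval (2 * q - 1)%nat (2 * P + 1)%nat ltac:(lia) ltac:(lia))
             (Hval (2 * q + 1)%nat (2 * P - 1)%nat ltac:(lia) ltac:(lia)) HM HK).
    nia.
  - rewrite Hdiff, Rabs_mult, Rabs_right by lra.
    unfold Rdiv. apply Rmult_lt_compat_l; lra.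
Qed.

Lemma delta_min_mul_sqrt_le (Q N : nat) : (2 <= N)%nat ->
  (36 * A * A * A * (Q * Q) <= N)%nat ->
  sqrt (INR N) < sqrt (INR (36 * A * A * A)) * INR (S Q) ->
  delta_min lam N * sqrt (INR N) <= sqrt (INR (36 * A * A * A)) * (16 + 3 * a * INR (S A)).
Proof.
  intros HN HQN Hsqrt. set (sD := sqrt (INR (36 * A * A * A))) in *.
  assert (HsN : 0 <= sqrt (INR N)) by apply sqrt_pos.
  assert (HsD : 0 <= sD) by apply sqrt_pos.
  assert (HSA : 0 <= 3 * a * (sD * INR (S A)))
    by (pose proof (pos_INR (S A)); apply Rmult_le_pos; nra).
  replace (sD * (16 + 3 * a * INR (S A))) with (16 * sD + 3 * a * (sD * INR (S A))) by ring.
  destruct (le_lt_dec Q A) as [Hsmall | Hlarge].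
  - assert (Hgap : delta_min lam N <= 3 * a).
    { pose proof (delta_min_le_gap lam N 1 (le_n 1) ltac:(lia)). pose proof first_gap_le. lra. }
    assert (INR (S Q) <= INR (S A)) by (apply le_INR; lia).
    assert (delta_min lam N * sqrt (INR N) <= 3 * a * sqrt (INR N))
      by (apply Rmult_le_compat_r; lra).
    assert (3 * a * sqrt (INR N) <= 3 * a * (sD * INR (S A)))
      by (apply Rmult_le_compat_l; nra).
    lra.
  - assert (HQ : 1 <= INR Q) by (apply (le_INR 1); lia).
    assert (Hgap : delta_min lam N < 8 / INR Q) by (apply delta_min_lt_8_div; lia).
    assert (HsQ : sqrt (INR N) <= 2 * sD * INR Q) by (rewrite S_INR in Hsqrt; nra).
    assert (delta_min lam N * sqrt (INR N) <= 8 / INR Q * sqrt (INR N))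
      by (apply Rmult_le_compat_r; lra).
    assert (8 / INR Q * sqrt (INR N) <= 8 / INR Q * (2 * sD * INR Q))
      by (apply Rmult_le_compat_l; [apply Rlt_le, Rdiv_lt_0_compat |]; lra).
    replace (8 / INR Q * (2 * sD * INR Q)) with (16 * sD) in * by (field; lra).
    lra.
Qed.

End Enumeration.

Lemma Rpower_neg_half (x : R) : 0 < x -> Rpower x (- (1 / 2)) = / sqrt x.
Proof.
  intros Hx. replace (- (1 / 2)) with (- / 2) by field.
  rewrite Rpower_Ropp, Rpower_sqrt by exact Hx. reflexivity.
Qed.

Lemma sqrt_div_bounds (N D : nat) : (0 < D)%nat ->
  let Q := Nat.sqrt (N / D) in
  (D * (Q * Q) <= N)%nat /\ sqrt (INR N) < sqrt (INR D) * INR (S Q).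
Proof.
  intros HD Q. destruct (Nat.sqrt_spec (N / D) ltac:(lia)) as [Hlo Hhi]. fold Q in Hlo, Hhi.
  pose proof (Nat.div_mod N D ltac:(lia)). pose proof (Nat.mod_upper_bound N D ltac:(lia)).
  split; [nia|].
  rewrite <- (sqrt_square (INR (S Q))), <- sqrt_mult by (apply pos_INR || nra).
  apply sqrt_lt_1; [apply pos_INR | rewrite <- !mult_INR; apply pos_INR |].
  rewrite <- !mult_INR. apply lt_INR. nia.
Qed.

Theorem proposition2p2 :
  forall alpha : R, irrational alpha -> 0 < alpha ->
  exists C : R, 0 < C /\
    forall lam : nat -> R, increasing_enum alpha lam ->
    forall N : nat, (2 <= N)%nat ->
      delta_min lam N <= C * Rpower (INR N) (- (1 / 2)).
Proof.
  intros a Hirr Ha.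
  assert (Hainv : 0 < / a) by (apply Rinv_0_lt_compat, Ha).
  destruct (INR_archimed 1 (a + / a) ltac:(lra)) as [A HA].
  assert (HaA : a <= INR A) by lra. assert (HAa : / a <= INR A) by lra.
  pose proof (one_le_INR_A a Ha A HaA HAa) as HA1%(INR_le 1).
  set (D := (36 * A * A * A)%nat).
  assert (HD : 0 < sqrt (INR D)) by (apply sqrt_lt_R0, lt_0_INR; unfold D; nia).
  exists (sqrt (INR D) * (16 + 3 * a * INR (S A))).
  split; [apply Rmult_lt_0_compat; [exact HD | pose proof (pos_INR (S A)); nra] |].
  intros lam Hlam N HN.
  assert (HNr : 0 < INR N) by (apply lt_0_INR; lia).
  rewrite Rpower_neg_half by exact HNr.
  apply (Rmult_le_reg_r (sqrt (INR N))); [apply sqrt_lt_R0, HNr |].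
  rewrite Rmult_assoc, Rinv_l by (apply Rgt_not_eq, sqrt_lt_R0, HNr). rewrite Rmult_1_r.
  destruct (sqrt_div_bounds N D ltac:(unfold D; nia)) as [HQN Hsqrt].
  exact (delta_min_mul_sqrt_le a lam Ha Hlam A HaA HAa Hirr _ N HN HQN Hsqrt).
Qed.
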